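(* For $\beta>2$ let $E_\beta(z)=\prod_{n=1}^\infty\Big(1-\frac{z}{n^\beta-i}\Big)$. Then there are constants $0<C_1\le C_2$ and $R>0$ such that $C_1|x|^{1/\beta}\le\log|E_\beta(x)|\le C_2|x|^{1/\beta}$ for all real $x$ with $|x|>R$. *)

From Stdlib Require Import Reals.
From Coquelicot Require Import Coquelicot.
Open Scope R_scope.

Definition zero_beta (beta : R) (n : nat) : C := (Rpower (INR n) beta, -1).

Fixpoint partial_prod (beta : R) (z : C) (N : nat) : C :=
  match N with
  | O => 1%C
  | S m => Cmult (partial_prod beta z m) (Cminus 1%C (Cdiv z (zero_beta beta (S m))))
  end.

Definition E_beta (beta : R) (z : C) : C :=
  @lim (CompleteNormedModule.CompleteSpace _ C_CompleteNormedModule)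
    (filtermap (partial_prod beta z) eventually).

(* Write [y = |x|^(1/beta)] and [a_n = n^beta].  Then [ln |E_beta(x)|] is the sum of
   [ln |1 - x / (a_n - i)|], which differs from [ln |1 - x / a_n|] by at most
   [1 / n^2], and [|x| / a_n = (y / n)^beta] lies above [(y / n)^2] for [n <= y] and
   below it for [n >= y], because [beta >= 2].
   Upper bound: the terms with [n <= y] are at most [ln 2 + beta ln (y / n)], which
   sums to [O(y)] by Stirling's bound on [ln k!]; the others are at most [(y / n)^2].
   Lower bound for [x < 0]: every term is nonnegative and the first [floor y] terms
   are at least [ln 2 / 2].
   Lower bound for [x > 0]: with [k = floor y], the terms are bounded below by
   [ln |1 - (k / n)^2|] for [n < k] and by [ln |1 - ((k + 1) / n)^2|] for [n > k + 1],
   whose sum telescopes into log-factorials and is at least [-3 ln 2]; the two terms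
   nearest to [y] cost [O(ln y)], and each of the [~ 2 y] terms with
   [2 y <= n <= 4 y] gains a constant since [beta > 2]. *)

From Stdlib Require Import Reals Lra Lia ZArith.
From Coquelicot Require Import Coquelicot.
Open Scope R_scope.

Lemma exp_le_compat x y : x <= y -> exp x <= exp y.
Proof. intros [H | ->]; [left; apply exp_increasing; exact H | lra]. Qed.

Lemma ln_ge_0 x : 1 <= x -> 0 <= ln x.
Proof. intros H. rewrite <- ln_1. apply ln_le; lra. Qed.

Lemma ln_gt_0 x : 1 < x -> 0 < ln x.
Proof. intros H. rewrite <- ln_1. apply ln_increasing; lra. Qed.

Lemma ln_le_pred z : 0 < z -> ln z <= z - 1.
Proof. intros Hz. pose proof (exp_ineq1_le (ln z)) as H. rewrite exp_ln in H; lra. Qed.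

Lemma ln_1p_le u : 0 <= u -> ln (1 + u) <= u.
Proof. intros Hu. pose proof (ln_le_pred (1 + u)). lra. Qed.

Lemma ln_le_2sqrt y : 0 < y -> ln y <= 2 * sqrt y.
Proof.
  intros Hy. assert (Hs : 0 < sqrt y) by (apply sqrt_lt_R0; lra).
  assert (ln y = 2 * ln (sqrt y)).
  { rewrite <- (sqrt_sqrt y) at 1 by lra. rewrite ln_mult by lra. ring. }
  pose proof (ln_le_pred (sqrt y) Hs). lra.
Qed.

Lemma ln_2_pos : 0 < ln 2.
Proof. apply ln_gt_0; lra. Qed.

Lemma INR_pos n : (1 <= n)%nat -> 0 < INR n.
Proof. intros H. apply lt_0_INR. lia. Qed.

Lemma INR_ge_1 n : (1 <= n)%nat -> 1 <= INR n.
Proof. intros H. apply (le_INR 1). lia. Qed.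

Lemma nat_floor_exists y : 0 <= y -> exists k : nat, INR k <= y < INR k + 1.
Proof.
  intros Hy. destruct (archimed y) as [H1 H2].
  assert (Hz : (0 < up y)%Z) by (apply lt_IZR; lra).
  exists (Z.to_nat (up y - 1)).
  rewrite INR_IZR_INZ, Z2Nat.id by lia. rewrite minus_IZR. simpl. lra.
Qed.

Lemma sqrt_sq_succ_ge a : 0 <= a -> a <= sqrt (a ^ 2 + 1).
Proof. intros Ha. rewrite <- (sqrt_pow2 a Ha) at 1. apply sqrt_le_1_alt. lra. Qed.

Lemma sqrt_sq_succ_le a : 0 < a -> sqrt (a ^ 2 + 1) <= a + / a.
Proof.
  intros Ha. assert (0 < / a) by (apply Rinv_0_lt_compat; lra).
  rewrite <- (sqrt_pow2 (a + / a)) by lra. apply sqrt_le_1_alt.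
  replace ((a + / a) ^ 2) with (a ^ 2 + 2 + (/ a) ^ 2) by (field; lra).
  pose proof (pow2_ge_0 (/ a)). lra.
Qed.

Lemma Rpower_ge_sq r beta : 2 <= beta -> 1 <= r -> r ^ 2 <= Rpower r beta.
Proof.
  intros Hb Hr. rewrite <- Rpower_pow by lra. apply Rle_Rpower; [lra | simpl; lra].
Qed.

Lemma Rpower_le_sq r beta : 2 <= beta -> 0 < r <= 1 -> Rpower r beta <= r ^ 2.
Proof.
  intros Hb Hr. rewrite <- Rpower_pow by lra. unfold Rpower.
  apply exp_le_compat. assert (ln r <= 0) by (rewrite <- ln_1; apply ln_le; lra).
  simpl. nra.
Qed.

Lemma Rpower_le_sq_half r beta : 2 <= beta -> 0 < r <= / 2 ->
  Rpower r beta <= Rpower 2 (2 - beta) * r ^ 2.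
Proof.
  intros Hb Hr. rewrite <- Rpower_pow by lra.
  replace beta with ((beta - 2) + INR 2) at 1 by (simpl; ring).
  rewrite Rpower_plus. apply Rmult_le_compat_r; [left; apply exp_pos|].
  apply Rle_trans with (Rpower (/ 2) (beta - 2)).
  - apply Rle_Rpower_l; lra.
  - unfold Rpower. rewrite ln_Rinv by lra. right; f_equal; ring.
Qed.

Fixpoint sum_to (g : nat -> R) (N : nat) : R :=
  match N with O => 0 | S m => sum_to g m + g (S m) end.

Definition sum_between (g : nat -> R) (a b : nat) : R := sum_to g b - sum_to g a.

Lemma sum_to_le g h N :
  (forall n, (1 <= n <= N)%nat -> g n <= h n) -> sum_to g N <= sum_to h N.
Proof.
  induction N as [|N IH]; intros H; simpl; [lra|].
  assert (sum_to g N <= sum_to h N) by (apply IH; intros; apply H; lia).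
  assert (g (S N) <= h (S N)) by (apply H; lia). lra.
Qed.

Lemma sum_to_ext g h N :
  (forall n, (1 <= n <= N)%nat -> g n = h n) -> sum_to g N = sum_to h N.
Proof.
  intros H. apply Rle_antisym; apply sum_to_le; intros n Hn; rewrite (H n Hn); lra.
Qed.

Lemma sum_to_plus g h N : sum_to (fun n => g n + h n) N = sum_to g N + sum_to h N.
Proof. induction N; simpl; lra. Qed.

Lemma sum_to_minus g h N : sum_to (fun n => g n - h n) N = sum_to g N - sum_to h N.
Proof. induction N; simpl; lra. Qed.

Lemma sum_to_scal c g N : sum_to (fun n => c * g n) N = c * sum_to g N.
Proof. induction N as [|N IH]; simpl; [ring | rewrite IH; ring]. Qed.

Lemma sum_to_const c N : sum_to (fun _ => c) N = INR N * c.
Proof. induction N as [|N IH]; simpl sum_to; [simpl; ring | rewrite IH, S_INR; ring]. Qed.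

Lemma sum_to_mono g a b : (a <= b)%nat ->
  (forall n, (a < n <= b)%nat -> 0 <= g n) -> sum_to g a <= sum_to g b.
Proof.
  intros Hab. induction Hab as [|b Hab IH]; intros H; [lra|].
  simpl. assert (sum_to g a <= sum_to g b) by (apply IH; intros; apply H; lia).
  assert (0 <= g (S b)) by (apply H; lia). lra.
Qed.

Lemma sum_to_shift g c j : sum_to (fun n => g (c + n)%nat) j = sum_to g (c + j) - sum_to g c.
Proof.
  induction j as [|j IH]; simpl; [rewrite Nat.add_0_r; ring|].
  rewrite IH, Nat.add_succ_r. simpl. ring.
Qed.

Lemma sum_to_rev g c j : (j <= c - 1)%nat ->
  sum_to (fun n => g (c - n)%nat) j = sum_to g (c - 1) - sum_to g (c - 1 - j).
Proof.
  induction j as [|j IH]; intros Hj; simpl; [rewrite Nat.sub_0_r; ring|].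
  rewrite IH by lia.
  replace (c - 1 - j)%nat with (S (c - 1 - S j)) by lia.
  replace (c - S j)%nat with (S (c - 1 - S j)) by lia.
  simpl. ring.
Qed.

Lemma sum_between_le g h a b : (a <= b)%nat ->
  (forall n, (a < n <= b)%nat -> g n <= h n) -> sum_between g a b <= sum_between h a b.
Proof.
  unfold sum_between. intros Hab. induction Hab as [|b Hab IH]; intros H; [lra|].
  simpl. assert (sum_to g b - sum_to g a <= sum_to h b - sum_to h a)
    by (apply IH; intros; apply H; lia).
  assert (g (S b) <= h (S b)) by (apply H; lia). lra.
Qed.

Lemma sum_between_minus g h a b :
  sum_between (fun n => g n - h n) a b = sum_between g a b - sum_between h a b.
Proof. unfold sum_between. rewrite !sum_to_minus. ring. Qed.

Lemma sum_between_scal c g a b : sum_between (fun n => c * g n) a b = c * sum_between g a b.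
Proof. unfold sum_between. rewrite !sum_to_scal. ring. Qed.

Definition inv_sq (n : nat) : R := / INR n ^ 2.

Lemma inv_sq_ge_0 n : 0 <= inv_sq n.
Proof.
  unfold inv_sq. destruct n; [simpl; rewrite Rmult_0_l, Rinv_0; lra|].
  left. apply Rinv_0_lt_compat, pow_lt, INR_pos. lia.
Qed.

Lemma sum_between_inv_sq_le q p : (1 <= q <= p)%nat ->
  sum_between inv_sq q p <= / INR q - / INR p.
Proof.
  intros [Hq Hqp]. unfold sum_between. induction Hqp as [|m Hqm IH]; [lra|].
  simpl sum_to. assert (0 < INR m) by (apply INR_pos; lia).
  unfold inv_sq at 2. rewrite S_INR.
  assert (/ (INR m + 1) ^ 2 <= / INR m - / (INR m + 1)).
  { apply Rmult_le_reg_l with (INR m * (INR m + 1) ^ 2); [nra|].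
    field_simplify; nra. }
  lra.
Qed.

Lemma sum_to_inv_sq_le N : sum_to inv_sq N <= 2.
Proof.
  destruct N as [|N]; [simpl; lra|].
  pose proof (sum_between_inv_sq_le 1 (S N) ltac:(lia)) as H. unfold sum_between in H.
  assert (sum_to inv_sq 1 = 1) by (simpl; unfold inv_sq; simpl; field).
  assert (0 < / INR (S N)) by (apply Rinv_0_lt_compat, INR_pos; lia).
  replace (/ INR 1) with 1 in H by (simpl; field). lra.
Qed.

Definition lnfact (n : nat) : R := sum_to (fun j => ln (INR j)) n.

Lemma lnfact_S n : lnfact (S n) = lnfact n + ln (INR (S n)).
Proof. reflexivity. Qed.

Lemma lnfact_ge k : INR k * ln (INR k) - INR k <= lnfact k.
Proof.
  induction k as [|k IH]; [unfold lnfact; simpl; lra|].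
  rewrite lnfact_S. destruct k as [|k]; [unfold lnfact; simpl; rewrite ln_1; lra|].
  set (K := S k) in *. assert (HK : 0 < INR K) by (apply INR_pos; unfold K; lia).
  rewrite S_INR.
  assert (ln (INR K + 1) - ln (INR K) <= / INR K).
  { rewrite <- ln_div by lra.
    pose proof (ln_le_pred ((INR K + 1) / INR K) ltac:(apply Rdiv_lt_0_compat; lra)).
    replace ((INR K + 1) / INR K - 1) with (/ INR K) in * by (field; lra). lra. }
  assert (INR K * (ln (INR K + 1) - ln (INR K)) <= 1).
  { apply Rmult_le_reg_l with (/ INR K); [apply Rinv_0_lt_compat; lra|].
    rewrite <- Rmult_assoc, Rinv_l by lra. lra. }
  nra.
Qed.

Lemma lnfact_midpoint N m : (m <= N)%nat -> 2 * lnfact N <= lnfact (N + m) + lnfact (N - m).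
Proof.
  induction m as [|m IH]; intros H; [rewrite Nat.add_0_r, Nat.sub_0_r; lra|].
  specialize (IH ltac:(lia)).
  rewrite Nat.add_succ_r, lnfact_S.
  replace (N - m)%nat with (S (N - S m)) in IH by lia. rewrite lnfact_S in IH.
  assert (ln (INR (S (N - S m))) <= ln (INR (S (N + m)))).
  { apply ln_le; [apply INR_pos; lia | apply le_INR; lia]. }
  lra.
Qed.

(* [ln |1 - (m/n)^2|], the logarithm of a factor of the product for
   [sin (pi m) / (pi m)], split into logarithms of naturals so that its sums
   telescope into log-factorials. *)
Definition ln_sinc_factor (m n : nat) : R :=
  ln (Rabs (INR m - INR n)) + ln (INR m + INR n) - 2 * ln (INR n).

Lemma ln_sinc_factor_eq m n : (1 <= n)%nat -> m <> n ->
  ln_sinc_factor m n = ln (Rabs (1 - (INR m / INR n) ^ 2)).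
Proof.
  intros Hn Hmn. assert (Hn0 : 0 < INR n) by (apply INR_pos; lia).
  assert (Hd : 0 < Rabs (INR m - INR n)).
  { apply Rabs_pos_lt. intros E. apply Hmn, INR_eq. lra. }
  assert (Hs : 0 < INR m + INR n) by (pose proof (pos_INR m); lra).
  replace (1 - (INR m / INR n) ^ 2) with ((INR n - INR m) * (INR m + INR n) / INR n ^ 2)
    by (field; lra).
  assert (Hn2 : 0 < INR n ^ 2) by (apply pow_lt; lra).
  rewrite Rabs_div, Rabs_mult, (Rabs_pos_eq (INR m + INR n)), (Rabs_pos_eq (INR n ^ 2)) by lra.
  rewrite Rabs_minus_sym, ln_div, ln_mult, ln_pow by nra.
  unfold ln_sinc_factor. replace (INR 2) with 2 by (simpl; lra). ring.
Qed.

Lemma sum_ln_sinc_factor_below k : (1 <= k)%nat ->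
  sum_to (ln_sinc_factor k) (k - 1) = lnfact (2 * k - 1) - lnfact k - lnfact (k - 1).
Proof.
  intros Hk. unfold ln_sinc_factor.
  rewrite !sum_to_minus, !sum_to_plus, sum_to_scal.
  rewrite (sum_to_ext _ (fun n => ln (INR (k - n))))
    by (intros n Hn; rewrite <- minus_INR, Rabs_pos_eq by (apply pos_INR || lia); reflexivity).
  rewrite (sum_to_ext (fun n => ln (INR k + INR n)) (fun n => ln (INR (k + n))))
    by (intros n Hn; rewrite plus_INR; reflexivity).
  rewrite (sum_to_rev (fun j => ln (INR j)) k (k - 1)) by lia.
  rewrite (sum_to_shift (fun j => ln (INR j)) k (k - 1)).
  replace (k - 1 - (k - 1))%nat with 0%nat by lia.
  replace (k + (k - 1))%nat with (2 * k - 1)%nat by lia.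
  unfold lnfact. simpl sum_to at 2. ring.
Qed.

Lemma sum_ln_sinc_factor_above m N : (m <= N)%nat ->
  sum_between (ln_sinc_factor m) m N =
  lnfact (N - m) + lnfact (N + m) - lnfact (2 * m) - 2 * lnfact N + 2 * lnfact m.
Proof.
  intros H. unfold sum_between. induction H as [|N HmN IH].
  - rewrite Nat.sub_diag. replace (m + m)%nat with (2 * m)%nat by lia.
    unfold lnfact at 1. simpl sum_to. ring.
  - simpl sum_to.
    replace (S N - m)%nat with (S (N - m)) by lia. rewrite Nat.add_succ_l, !lnfact_S.
    unfold ln_sinc_factor at 2.
    rewrite Rabs_minus_sym, <- minus_INR, <- plus_INR, Rabs_pos_eq by (apply pos_INR || lia).
    replace (S N - m)%nat with (S (N - m)) by lia. rewrite (Nat.add_comm m (S N)), Nat.add_succ_l. lra.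
Qed.

Lemma sum_ln_sinc_factor_ge k N : (1 <= k)%nat -> (k + 1 <= N)%nat ->
  - (3 * ln 2) <=
  sum_to (ln_sinc_factor k) (k - 1) + sum_between (ln_sinc_factor (k + 1)) (k + 1) N.
Proof.
  intros Hk HN. rewrite sum_ln_sinc_factor_below, sum_ln_sinc_factor_above by lia.
  pose proof (lnfact_midpoint N (k + 1) HN).
  assert (Ek : lnfact k = lnfact (k - 1) + ln (INR k)).
  { replace k with (S (k - 1)) at 1 3 by lia. apply lnfact_S. }
  assert (Ek1 : lnfact (k + 1) = lnfact k + ln (INR (k + 1))).
  { rewrite Nat.add_1_r. apply lnfact_S. }
  assert (E2k : lnfact (2 * (k + 1)) = lnfact (2 * k - 1) + ln (INR (2 * k))
                + ln (INR (2 * k + 1)) + ln (INR (2 * (k + 1)))).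
  { replace (2 * (k + 1))%nat with (S (S (S (2 * k - 1)))) at 1 by lia.
    rewrite !lnfact_S. repeat f_equal; lia. }
  assert (ln_double : forall j, (1 <= j)%nat -> ln (INR (2 * j)) = ln 2 + ln (INR j)).
  { intros j Hj. pose proof (INR_pos j Hj).
    rewrite mult_INR, ln_mult by (simpl; lra). reflexivity. }
  assert (ln (INR (2 * k + 1)) <= ln (INR (2 * (k + 1)))).
  { apply ln_le; [apply INR_pos; lia | apply le_INR; lia]. }
  rewrite (ln_double (k + 1)%nat) in * by lia. rewrite ln_double in E2k by lia.
  lra.
Qed.

Definition factor_modulus (a x : R) : R := sqrt ((a - x) ^ 2 + 1) / sqrt (a ^ 2 + 1).

Definition ln_factor (beta x : R) (n : nat) : R := ln (Cmod (1 - RtoC x / zero_beta beta n)).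

Lemma zero_beta_neq_0 beta n : zero_beta beta n <> 0%C.
Proof. unfold zero_beta. intros H. injection H. lra. Qed.

Lemma factor_modulus_pos a x : 0 < factor_modulus a x.
Proof.
  unfold factor_modulus. pose proof (pow2_ge_0 (a - x)). pose proof (pow2_ge_0 a).
  apply Rdiv_lt_0_compat; apply sqrt_lt_R0; lra.
Qed.

Lemma Cmod_factor beta x n :
  Cmod (1 - RtoC x / zero_beta beta n) = factor_modulus (Rpower (INR n) beta) x.
Proof.
  pose proof (zero_beta_neq_0 beta n) as Hz.
  replace (1 - RtoC x / zero_beta beta n)%C with ((zero_beta beta n - RtoC x) / zero_beta beta n)%C
    by (field; exact Hz).
  rewrite Cmod_div by exact Hz. unfold factor_modulus, Cmod, zero_beta. simpl.
  f_equal; f_equal; ring.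
Qed.

Lemma Cmod_div_zero_beta beta x n :
  Cmod (RtoC x / zero_beta beta n) = Rabs x / sqrt (Rpower (INR n) beta ^ 2 + 1).
Proof.
  rewrite Cmod_div, Cmod_R by apply zero_beta_neq_0. unfold Cmod, zero_beta. simpl.
  f_equal; f_equal; ring.
Qed.

Lemma Rpower_INR_ge_sq beta n : 2 <= beta -> (1 <= n)%nat -> INR n ^ 2 <= Rpower (INR n) beta.
Proof. intros Hb Hn. apply Rpower_ge_sq; [exact Hb | apply INR_ge_1, Hn]. Qed.

Lemma ln_factor_le beta x n : ln_factor beta x n <= ln (1 + Rabs x / Rpower (INR n) beta).
Proof.
  set (a := Rpower (INR n) beta). assert (Ha : 0 < a) by apply exp_pos.
  unfold ln_factor. apply ln_le; [rewrite Cmod_factor; apply factor_modulus_pos|].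
  eapply Rle_trans; [apply Cmod_triangle|].
  rewrite Cmod_1, Cmod_opp, Cmod_div_zero_beta. fold a.
  apply Rplus_le_compat_l, Rmult_le_compat_l; [apply Rabs_pos|].
  apply Rinv_le_contravar; [exact Ha | apply sqrt_sq_succ_ge; lra].
Qed.

Lemma ln_factor_le_inv_sq beta x n : 2 <= beta -> (1 <= n)%nat ->
  ln_factor beta x n <= Rabs x * inv_sq n.
Proof.
  intros Hb Hn. eapply Rle_trans; [apply ln_factor_le|].
  assert (0 < INR n ^ 2) by (apply pow_lt, INR_pos, Hn).
  eapply Rle_trans; [apply ln_1p_le, Rdiv_le_0_compat; [apply Rabs_pos | apply exp_pos]|].
  apply Rmult_le_compat_l; [apply Rabs_pos|].
  apply Rinv_le_contravar; [lra | apply Rpower_INR_ge_sq; assumption].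
Qed.

Lemma ln_factor_ge_0 beta x n : x <= 0 -> 0 <= ln_factor beta x n.
Proof.
  intros Hx. unfold ln_factor. rewrite Cmod_factor. apply ln_ge_0.
  unfold factor_modulus. set (a := Rpower (INR n) beta). assert (Ha : 0 < a) by apply exp_pos.
  assert (Hs : 0 < sqrt (a ^ 2 + 1)) by (apply sqrt_lt_R0; nra).
  apply Rmult_le_reg_r with (sqrt (a ^ 2 + 1)); [exact Hs|].
  unfold Rdiv. rewrite Rmult_assoc, Rinv_l, Rmult_1_l, Rmult_1_r by lra.
  apply sqrt_le_1_alt. nra.
Qed.

Lemma ln_factor_ge_ln_2_half beta x n :
  1 <= Rpower (INR n) beta <= - x -> ln 2 / 2 <= ln_factor beta x n.
Proof.
  intros Ha. unfold ln_factor. rewrite Cmod_factor.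
  replace (ln 2 / 2) with (ln (sqrt 2)) by (rewrite <- Rpower_sqrt, ln_Rpower by lra; lra).
  apply ln_le; [apply sqrt_lt_R0; lra|].
  unfold factor_modulus. set (a := Rpower (INR n) beta) in *.
  assert (Hs : 0 < sqrt (a ^ 2 + 1)) by (apply sqrt_lt_R0; nra).
  apply Rmult_le_reg_r with (sqrt (a ^ 2 + 1)); [exact Hs|].
  unfold Rdiv. rewrite Rmult_assoc, Rinv_l, Rmult_1_r by lra.
  rewrite <- sqrt_mult_alt by lra. apply sqrt_le_1_alt. nra.
Qed.

Lemma ln_factor_ge_crude beta x n : 2 <= beta -> (1 <= n)%nat ->
  - (ln 2 + beta * ln (INR n)) <= ln_factor beta x n.
Proof.
  intros Hb Hn. unfold ln_factor. rewrite Cmod_factor. unfold factor_modulus.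
  set (a := Rpower (INR n) beta).
  assert (Ha : 1 <= a).
  { pose proof (Rpower_INR_ge_sq beta n Hb Hn). pose proof (INR_ge_1 n Hn). fold a in H. nra. }
  assert (Hs : 0 < sqrt (a ^ 2 + 1)) by (apply sqrt_lt_R0; nra).
  assert (Hle : sqrt (a ^ 2 + 1) <= 2 * a).
  { eapply Rle_trans; [apply sqrt_sq_succ_le; lra|].
    assert (/ a <= 1) by (rewrite <- Rinv_1; apply Rinv_le_contravar; lra). lra. }
  assert (Hnum : 1 <= sqrt ((a - x) ^ 2 + 1)).
  { rewrite <- sqrt_1 at 1. apply sqrt_le_1_alt. pose proof (pow2_ge_0 (a - x)). lra. }
  apply Rle_trans with (ln (/ (2 * a))).
  - rewrite ln_Rinv, ln_mult by lra. unfold a. rewrite ln_Rpower. lra.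
  - apply ln_le; [apply Rinv_0_lt_compat; lra|].
    assert (/ (2 * a) <= / sqrt (a ^ 2 + 1)) by (apply Rinv_le_contravar; lra).
    assert (0 < / sqrt (a ^ 2 + 1)) by (apply Rinv_0_lt_compat; lra).
    unfold Rdiv. nra.
Qed.

(* The imaginary part [-1] of the zeros costs at most [1 / a ^ 2 <= 1 / n ^ 2]
   compared with the real factor [|1 - x / a|]. *)
Lemma ln_factor_ge_of_gap beta x n q : 2 <= beta -> (1 <= n)%nat ->
  0 < q <= Rabs (1 - x / Rpower (INR n) beta) -> ln q - inv_sq n <= ln_factor beta x n.
Proof.
  intros Hb Hn Hq. unfold ln_factor. rewrite Cmod_factor. unfold factor_modulus.
  pose proof (Rpower_INR_ge_sq beta n Hb Hn) as Hsq.
  set (a := Rpower (INR n) beta) in *. assert (Ha : 0 < a) by apply exp_pos.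
  assert (Hn1 : 1 <= INR n) by (apply INR_ge_1, Hn).
  assert (Hinv : 0 < / a ^ 2) by (apply Rinv_0_lt_compat, pow_lt; lra).
  assert (Hdist : Rabs (1 - x / a) = Rabs (a - x) / a).
  { replace (1 - x / a) with ((a - x) / a) by (field; lra).
    rewrite Rabs_div, (Rabs_pos_eq a); lra. }
  assert (Hmod : Rabs (a - x) / (a * (1 + / a ^ 2)) <= sqrt ((a - x) ^ 2 + 1) / sqrt (a ^ 2 + 1)).
  { unfold Rdiv. apply Rmult_le_compat.
    - apply Rabs_pos.
    - left. apply Rinv_0_lt_compat. nra.
    - rewrite <- sqrt_Rsqr_abs. apply sqrt_le_1_alt. unfold Rsqr. simpl. lra.
    - apply Rinv_le_contravar; [apply sqrt_lt_R0; nra|].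
      replace (a * (1 + / a ^ 2)) with (a + / a) by (field; lra). apply sqrt_sq_succ_le, Ha. }
  assert (Hcorr : ln (1 + / a ^ 2) <= inv_sq n).
  { eapply Rle_trans; [apply ln_1p_le; lra|].
    apply Rinv_le_contravar; [apply pow_lt; lra|].
    apply pow_incr. nra. }
  assert (Hax : 0 < Rabs (a - x) / a) by (rewrite <- Hdist; lra).
  apply Rle_trans with (ln (Rabs (a - x) / (a * (1 + / a ^ 2)))).
  - rewrite Rdiv_mult_distr, ln_div, <- Hdist by lra.
    assert (ln q <= ln (Rabs (1 - x / a))) by (apply ln_le; lra). lra.
  - apply ln_le; [rewrite Rdiv_mult_distr; apply Rdiv_lt_0_compat; lra | exact Hmod].
Qed.

Lemma Cmod_partial_prod beta x N :
  Cmod (partial_prod beta (RtoC x) N) = exp (sum_to (ln_factor beta x) N).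
Proof.
  induction N as [|N IH]; simpl; [rewrite Cmod_1, exp_0; reflexivity|].
  rewrite Cmod_mult, IH, exp_plus. unfold ln_factor. rewrite exp_ln; [reflexivity|].
  rewrite Cmod_factor. apply factor_modulus_pos.
Qed.

Lemma Cmod_partial_prod_le beta x N : 2 <= beta ->
  Cmod (partial_prod beta (RtoC x) N) <= exp (2 * Rabs x).
Proof.
  intros Hb. rewrite Cmod_partial_prod. apply exp_le_compat.
  apply Rle_trans with (sum_to (fun n => Rabs x * inv_sq n) N).
  - apply sum_to_le. intros n Hn. apply ln_factor_le_inv_sq; [exact Hb | lia].
  - rewrite sum_to_scal. pose proof (sum_to_inv_sq_le N). pose proof (Rabs_pos x). nra.
Qed.

Lemma Cmod_partial_prod_sub_le beta x q p : 2 <= beta -> (q <= p)%nat ->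
  Cmod (partial_prod beta (RtoC x) p - partial_prod beta (RtoC x) q)
  <= exp (2 * Rabs x) * Rabs x * sum_between inv_sq q p.
Proof.
  intros Hb Hqp. unfold sum_between. induction Hqp as [|p Hqp IH].
  - replace (_ - _)%C with (RtoC 0) by ring. rewrite Cmod_0. lra.
  - set (P := partial_prod beta (RtoC x)) in *.
    assert (Hstep : Cmod (P (S p) - P p) <= exp (2 * Rabs x) * (Rabs x * inv_sq (S p))).
    { unfold P. simpl.
      replace (_ - _)%C with (- (partial_prod beta x p * (x / zero_beta beta (S p))))%C by ring.
      rewrite Cmod_opp, Cmod_mult, Cmod_div_zero_beta.
      apply Rmult_le_compat; [apply Cmod_ge_0 | | apply Cmod_partial_prod_le, Hb |].
      - apply Rdiv_le_0_compat; [apply Rabs_pos | apply sqrt_lt_R0; nra].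
      - apply Rmult_le_compat_l; [apply Rabs_pos|].
        pose proof (Rpower_INR_ge_sq beta (S p) Hb ltac:(lia)).
        pose proof (sqrt_sq_succ_ge (Rpower (INR (S p)) beta) ltac:(left; apply exp_pos)).
        apply Rinv_le_contravar; [apply pow_lt, INR_pos; lia | lra]. }
    replace (P (S p) - P q)%C with ((P (S p) - P p) + (P p - P q))%C by ring.
    eapply Rle_trans; [apply Cmod_triangle|]. simpl sum_to. lra.
Qed.

Lemma partial_prod_cauchy beta x : 2 <= beta ->
  forall eps, 0 < eps -> exists N, forall p q, (N <= p)%nat -> (N <= q)%nat ->
    Cmod (partial_prod beta (RtoC x) p - partial_prod beta (RtoC x) q) < eps.
Proof.
  intros Hb eps He. set (M := exp (2 * Rabs x) * Rabs x).
  assert (HM : 0 <= M) by (pose proof (exp_pos (2 * Rabs x)); pose proof (Rabs_pos x); unfold M; nra).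
  destruct (archimed_cor1 (eps / (M + 1))) as [N [HN HN0]]; [apply Rdiv_lt_0_compat; lra|].
  assert (Hsorted : forall p q, (N <= q <= p)%nat ->
    Cmod (partial_prod beta (RtoC x) p - partial_prod beta (RtoC x) q) < eps).
  { intros p q Hqp. eapply Rle_lt_trans; [apply Cmod_partial_prod_sub_le; [exact Hb | lia]|].
    fold M. pose proof (sum_between_inv_sq_le q p ltac:(lia)).
    assert (0 < / INR p) by (apply Rinv_0_lt_compat, INR_pos; lia).
    assert (/ INR q <= / INR N) by (apply Rinv_le_contravar; [apply INR_pos | apply le_INR]; lia).
    assert (0 <= sum_between inv_sq q p).
    { unfold sum_between. pose proof (sum_to_mono inv_sq q p ltac:(lia) (fun n _ => inv_sq_ge_0 n)).
      lra. }
    apply Rle_lt_trans with ((M + 1) * sum_between inv_sq q p); [nra|].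
    replace eps with ((M + 1) * (eps / (M + 1))) by (field; lra).
    apply Rmult_lt_compat_l; lra. }
  exists N. intros p q Hp Hq. destruct (Nat.le_ge_cases q p); [apply Hsorted; lia|].
  rewrite <- Cmod_opp, Copp_minus_distr. apply Hsorted; lia.
Qed.

Lemma Cmod_sub_lim_lt (u : nat -> C) :
  (forall eps, 0 < eps -> exists N, forall p q, (N <= p)%nat -> (N <= q)%nat ->
     Cmod (u p - u q) < eps) ->
  forall eps, 0 < eps -> exists N, forall n, (N <= n)%nat ->
    Cmod (u n - @lim (CompleteNormedModule.CompleteSpace _ C_CompleteNormedModule)
                     (filtermap u eventually)) < eps.
Proof.
  intros Hc eps Heps. set (F := filtermap u eventually).
  assert (HF : @cauchy (CompleteNormedModule.CompleteSpace _ C_CompleteNormedModule) F).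
  { intros e. destruct (Hc e (cond_pos e)) as [N HN]. exists (u N), N. intros n Hn.
    change (@ball (NormedModule.UniformSpace _ C_NormedModule) (u N) e (u n)).
    apply norm_compat1. apply HN; lia. }
  pose proof (@norm_factor_gt_0 _ C_NormedModule) as Hnf.
  assert (He : 0 < eps / @norm_factor _ C_NormedModule) by (apply Rdiv_lt_0_compat; lra).
  destruct (@complete_cauchy (CompleteNormedModule.CompleteSpace _ C_CompleteNormedModule)
              F _ HF (mkposreal _ He)) as [N HN].
  exists N. intros n Hn. specialize (HN n Hn).
  apply (@norm_compat2 _ C_NormedModule) in HN. simpl in HN.
  eapply Rlt_le_trans; [exact HN | right; field; lra].
Qed.

Lemma between_of_approx a b e :
  (forall eps, 0 < eps -> exists u, a <= u <= b /\ Rabs (u - e) < eps) -> a <= e <= b.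
Proof.
  intros H. split.
  - destruct (Rle_lt_dec a e) as [? | Hlt]; [assumption|].
    destruct (H (a - e) ltac:(lra)) as [u [Hu Hue]]. apply Rabs_def2 in Hue. lra.
  - destruct (Rle_lt_dec e b) as [? | Hlt]; [assumption|].
    destruct (H (e - b) ltac:(lra)) as [u [Hu Hue]]. apply Rabs_def2 in Hue. lra.
Qed.

Lemma ln_Cmod_E_beta_between beta x lo hi N0 : 2 <= beta ->
  (forall N, (N0 <= N)%nat -> lo <= sum_to (ln_factor beta x) N <= hi) ->
  lo <= ln (Cmod (E_beta beta (RtoC x))) <= hi.
Proof.
  intros Hb Hsum. set (e := Cmod (E_beta beta (RtoC x))).
  assert (He : exp lo <= e <= exp hi).
  { apply between_of_approx. intros eps Heps.
    destruct (Cmod_sub_lim_lt _ (partial_prod_cauchy beta x Hb) eps Heps) as [N HN].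
    exists (Cmod (partial_prod beta (RtoC x) (max N N0))). split.
    - rewrite Cmod_partial_prod. destruct (Hsum (max N N0) ltac:(lia)).
      split; apply exp_le_compat; assumption.
    - eapply Rle_lt_trans; [| apply (HN (max N N0)); lia].
      apply (@norm_triangle_inv _ C_NormedModule). }
  pose proof (exp_pos lo). rewrite <- (ln_exp lo), <- (ln_exp hi).
  split; apply ln_le; lra.
Qed.

Lemma Rpower_div_INR beta y n : 0 < y -> (1 <= n)%nat ->
  Rpower y beta / Rpower (INR n) beta = Rpower (y / INR n) beta.
Proof.
  intros Hy Hn. pose proof (INR_pos n Hn). unfold Rpower, Rdiv.
  rewrite <- exp_Ropp, <- exp_plus, ln_mult, ln_Rinv by (try apply Rinv_0_lt_compat; lra).
  f_equal. ring.
Qed.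

Lemma Rpower_root_pow t beta : 0 < t -> beta <> 0 ->
  Rpower (Rpower t (1 / beta)) beta = t.
Proof.
  intros Ht Hb. rewrite Rpower_mult. replace (1 / beta * beta) with 1 by (field; exact Hb).
  apply Rpower_1, Ht.
Qed.

Lemma lt_Rpower_root Y t beta : 0 < Y -> 0 < beta -> Rpower Y beta < t ->
  Y < Rpower t (1 / beta).
Proof.
  intros HY Hb Ht. replace Y with (Rpower (Rpower Y beta) (1 / beta)) at 1.
  - apply Rlt_Rpower_l; [apply Rdiv_lt_0_compat; lra|]. split; [apply exp_pos | exact Ht].
  - rewrite Rpower_mult. replace (beta * (1 / beta)) with 1 by (field; lra).
    apply Rpower_1, HY.
Qed.

Definition gap_const (beta : R) : R := (1 - Rpower 2 (2 - beta)) / 16.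

Lemma gap_const_pos beta : 2 < beta -> 0 < gap_const beta.
Proof.
  intros Hb. unfold gap_const.
  assert (Rpower 2 (2 - beta) < Rpower 2 0) by (apply Rpower_lt; lra).
  rewrite Rpower_O in * by lra. lra.
Qed.

Lemma gap_const_le beta : gap_const beta <= / 16.
Proof. unfold gap_const. pose proof (exp_pos ((2 - beta) * ln 2)). unfold Rpower. lra. Qed.

Lemma Rpower_sub_sq_ge_gap r beta : 2 <= beta -> / 4 <= r <= / 2 ->
  gap_const beta <= r ^ 2 - Rpower r beta.
Proof.
  intros Hb Hr. pose proof (Rpower_le_sq_half r beta Hb ltac:(lra)).
  unfold gap_const.
  assert (Rpower 2 (2 - beta) <= Rpower 2 0) by (apply Rle_Rpower; lra).
  rewrite Rpower_O in * by lra.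
  assert (/ 16 <= r ^ 2) by nra.
  assert (0 <= (r ^ 2 - / 16) * (1 - Rpower 2 (2 - beta))) by (apply Rmult_le_pos; lra).
  lra.
Qed.

Section Sum_bounds.

Variables (beta y : R) (k : nat).
Hypothesis Hbeta : 2 < beta.
Hypothesis Hy : 2 <= y.
Hypothesis Hk : INR k <= y < INR k + 1.

Let t := Rpower y beta.

Lemma floor_ge_2 : (2 <= k)%nat.
Proof. assert (INR 1 < INR k) by (simpl; lra). apply INR_lt in H. lia. Qed.

Lemma ratio_ge_sq n : (1 <= n <= k)%nat -> (y / INR n) ^ 2 <= t / Rpower (INR n) beta.
Proof.
  intros Hn. unfold t. rewrite Rpower_div_INR by (lra || lia). apply Rpower_ge_sq; [lra|].
  assert (INR n <= INR k) by (apply le_INR; lia). pose proof (INR_pos n ltac:(lia)).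
  apply Rmult_le_reg_r with (INR n); [lra|]. unfold Rdiv. rewrite Rmult_assoc, Rinv_l; lra.
Qed.

Lemma ratio_le_sq n : (k < n)%nat -> t / Rpower (INR n) beta <= (y / INR n) ^ 2.
Proof.
  intros Hn. unfold t. rewrite Rpower_div_INR by (lra || lia). apply Rpower_le_sq; [lra|].
  assert (INR k + 1 <= INR n) by (rewrite <- S_INR; apply le_INR; lia).
  pose proof (INR_pos n ltac:(lia)). split; [apply Rdiv_lt_0_compat; lra|].
  apply Rmult_le_reg_r with (INR n); [lra|]. unfold Rdiv. rewrite Rmult_assoc, Rinv_l; lra.
Qed.

Lemma ratio_le_sq_sub_gap n : (2 * k + 2 <= n <= 4 * k)%nat ->
  t / Rpower (INR n) beta <= (y / INR n) ^ 2 - gap_const beta.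
Proof.
  intros Hn. pose proof floor_ge_2. pose proof (INR_pos n ltac:(lia)).
  assert (2 * y <= INR n).
  { apply Rle_trans with (INR (2 * k + 2)); [rewrite plus_INR, mult_INR; simpl; lra|].
    apply le_INR; lia. }
  assert (INR n <= 4 * y) by (apply Rle_trans with (INR (4 * k)); [apply le_INR; lia|];
    rewrite mult_INR; simpl; lra).
  unfold t. rewrite Rpower_div_INR by (lra || lia).
  enough (gap_const beta <= (y / INR n) ^ 2 - Rpower (y / INR n) beta) by lra.
  apply Rpower_sub_sq_ge_gap; [lra|]. split.
  - apply Rmult_le_reg_r with (INR n); [lra|]. unfold Rdiv. rewrite Rmult_assoc, Rinv_l; lra.
  - apply Rmult_le_reg_r with (INR n); [lra|]. unfold Rdiv. rewrite Rmult_assoc, Rinv_l; lra.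
Qed.


Lemma ratio_ge_1 n : (1 <= n <= k)%nat -> 1 <= t / Rpower (INR n) beta.
Proof.
  intros Hn. eapply Rle_trans; [| apply ratio_ge_sq, Hn].
  pose proof (INR_pos n ltac:(lia)). assert (INR n <= INR k) by (apply le_INR; lia).
  rewrite <- (pow1 2). apply pow_incr. split; [lra|].
  apply Rmult_le_reg_r with (INR n); [lra|]. unfold Rdiv. rewrite Rmult_assoc, Rinv_l; lra.
Qed.

Lemma ln_floor_le : INR k * (ln y - ln (INR k)) <= 1.
Proof.
  pose proof floor_ge_2. assert (Hk0 : 0 < INR k) by (apply INR_pos; lia).
  rewrite <- ln_div by lra.
  pose proof (ln_le_pred (y / INR k) ltac:(apply Rdiv_lt_0_compat; lra)).
  apply Rle_trans with (INR k * (y / INR k - 1)); [apply Rmult_le_compat_l; lra|].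
  replace (INR k * (y / INR k - 1)) with (y - INR k) by (field; lra). lra.
Qed.

Lemma sum_ln_factor_le x N : Rabs x = t ->
  sum_to (ln_factor beta x) N <= (ln 2 + 2 * beta + 2) * y.
Proof.
  intros Hx. pose proof floor_ge_2. assert (Hk0 : 0 < INR k) by (apply INR_pos; lia).
  set (u := fun n => ln (1 + t / Rpower (INR n) beta)).
  assert (Hta : forall n, 0 <= t / Rpower (INR n) beta)
    by (intros n; apply Rdiv_le_0_compat; [left|]; apply exp_pos).
  assert (Hle_u : sum_to (ln_factor beta x) N <= sum_to u (max N k)).
  { apply Rle_trans with (sum_to u N).
    - apply sum_to_le. intros n _. eapply Rle_trans; [apply ln_factor_le|]. rewrite Hx. apply Rle_refl.
    - apply sum_to_mono; [lia|]. intros n _. apply ln_ge_0. specialize (Hta n). lra. }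
  assert (Hhead : sum_to u k <= INR k * ln 2 + beta * (INR k * ln y - lnfact k)).
  { apply Rle_trans with (sum_to (fun n => ln 2 + beta * (ln y - ln (INR n))) k).
    - apply sum_to_le. intros n Hn. unfold u.
      pose proof (ratio_ge_1 n Hn).
      apply Rle_trans with (ln (2 * (t / Rpower (INR n) beta))); [apply ln_le; lra|].
      rewrite ln_mult by lra. unfold t.
      rewrite Rpower_div_INR, ln_Rpower, ln_div by (lra || lia || apply INR_pos; lia).
      lra.
    - rewrite sum_to_plus, sum_to_const, sum_to_scal, sum_to_minus, sum_to_const.
      unfold lnfact. lra. }
  assert (Htail : sum_between u k (max N k) <= 2 * y).
  { apply Rle_trans with (sum_between (fun n => y ^ 2 * inv_sq n) k (max N k)).
    - apply sum_between_le; [lia|]. intros n Hn. unfold u.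
      eapply Rle_trans; [apply ln_1p_le, Hta|].
      eapply Rle_trans; [apply ratio_le_sq; lia|].
      unfold inv_sq. right. field. apply not_0_INR. lia.
    - rewrite sum_between_scal. pose proof (sum_between_inv_sq_le k (max N k) ltac:(lia)).
      assert (0 < / INR (max N k)) by (apply Rinv_0_lt_compat, INR_pos; lia).
      apply Rle_trans with (y ^ 2 * / INR k); [pose proof (pow2_ge_0 y); nra|].
      apply Rmult_le_reg_r with (INR k); [lra|].
      rewrite Rmult_assoc, Rinv_l by lra. nra. }
  unfold sum_between in Htail.
  pose proof (lnfact_ge k). pose proof ln_floor_le. pose proof ln_2_pos.
  assert (INR k * ln 2 <= y * ln 2) by (apply Rmult_le_compat_r; lra).
  nra.
Qed.

Lemma sum_ln_factor_ge_of_neg N : (k <= N)%nat ->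
  ln 2 / 4 * y <= sum_to (ln_factor beta (- t)) N.
Proof.
  intros HN. pose proof floor_ge_2.
  assert (Ht : 0 <= t) by (left; apply exp_pos).
  assert (Hmono : sum_to (ln_factor beta (- t)) k <= sum_to (ln_factor beta (- t)) N).
  { apply sum_to_mono; [exact HN|]. intros n _. apply ln_factor_ge_0. lra. }
  assert (Hhead : sum_to (fun _ => ln 2 / 2) k <= sum_to (ln_factor beta (- t)) k).
  { apply sum_to_le. intros n Hn. apply ln_factor_ge_ln_2_half. split.
    - pose proof (Rpower_INR_ge_sq beta n ltac:(lra) ltac:(lia)).
      pose proof (INR_ge_1 n ltac:(lia)). nra.
    - pose proof (ratio_ge_1 n Hn). pose proof (exp_pos (beta * ln (INR n))).
      apply Rmult_le_reg_r with (/ Rpower (INR n) beta); [apply Rinv_0_lt_compat; assumption|].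
      rewrite Rinv_r by (apply Rgt_not_eq, exp_pos). unfold Rdiv in *. lra. }
  rewrite sum_to_const in Hhead. pose proof ln_2_pos.
  assert (y / 2 <= INR k) by lra. nra.
Qed.

Lemma sq_div_le a b c : 0 <= a <= b -> 0 < c -> (a / c) ^ 2 <= (b / c) ^ 2.
Proof.
  intros Hab Hc. apply pow_incr. split; [apply Rdiv_le_0_compat; lra|].
  unfold Rdiv. apply Rmult_le_compat_r; [left; apply Rinv_0_lt_compat|]; lra.
Qed.

Lemma ln_factor_ge_below n : (1 <= n <= k - 1)%nat ->
  ln_sinc_factor k n - inv_sq n <= ln_factor beta t n.
Proof.
  intros Hn. pose proof (INR_pos n ltac:(lia)).
  assert (Hnk : INR n + 1 <= INR k) by (rewrite <- S_INR; apply le_INR; lia).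
  assert (Hr : 1 < INR k / INR n).
  { apply Rmult_lt_reg_r with (INR n); [lra|]. unfold Rdiv. rewrite Rmult_assoc, Rinv_l; lra. }
  assert (Hq : 1 < (INR k / INR n) ^ 2) by (simpl; nra).
  pose proof (ratio_ge_sq n ltac:(lia)).
  pose proof (sq_div_le (INR k) y (INR n) ltac:(lra) ltac:(lra)).
  rewrite ln_sinc_factor_eq by lia. apply ln_factor_ge_of_gap; [lra | lia|].
  rewrite !Rabs_left1 by lra. split; lra.
Qed.

Lemma ln_factor_ge_above n : (k + 2 <= n)%nat ->
  ln_sinc_factor (k + 1) n - inv_sq n <= ln_factor beta t n.
Proof.
  intros Hn. pose proof (INR_pos n ltac:(lia)).
  assert (Hkn : INR (k + 1) + 1 <= INR n) by (rewrite <- S_INR; apply le_INR; lia).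
  assert (Hq : (INR (k + 1) / INR n) ^ 2 < 1).
  { assert (0 <= INR (k + 1) / INR n < 1).
    { split; [apply Rdiv_le_0_compat; [apply pos_INR | lra]|].
      apply Rmult_lt_reg_r with (INR n); [lra|]. unfold Rdiv. rewrite Rmult_assoc, Rinv_l; lra. }
    simpl; nra. }
  pose proof (ratio_le_sq n ltac:(lia)).
  pose proof (sq_div_le y (INR (k + 1)) (INR n) ltac:(rewrite plus_INR; simpl; lra) ltac:(lra)).
  rewrite ln_sinc_factor_eq by lia. apply ln_factor_ge_of_gap; [lra | lia|].
  rewrite !Rabs_pos_eq by lra. split; lra.
Qed.

(* The only place where [2 < beta] is needed: for [2 y <= n <= 4 y] the ratio
   [(y / n) ^ beta] stays below [(y / n) ^ 2] by a fixed amount. *)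
Lemma ln_factor_ge_gap n : (2 * k + 2 <= n <= 4 * k)%nat ->
  ln_sinc_factor (k + 1) n + ln (1 + gap_const beta) - inv_sq n <= ln_factor beta t n.
Proof.
  intros Hn. pose proof (INR_pos n ltac:(lia)).
  assert (Hkn : INR (k + 1) + 1 <= INR n) by (rewrite <- S_INR; apply le_INR; lia).
  set (q := 1 - (INR (k + 1) / INR n) ^ 2).
  assert (Hq : 0 < q <= 1).
  { unfold q. split; [|pose proof (pow2_ge_0 (INR (k + 1) / INR n)); lra].
    assert ((INR (k + 1) / INR n) ^ 2 < 1); [|lra].
    assert (0 <= INR (k + 1) / INR n < 1).
    { split; [apply Rdiv_le_0_compat; [apply pos_INR | lra]|].
      apply Rmult_lt_reg_r with (INR n); [lra|]. unfold Rdiv. rewrite Rmult_assoc, Rinv_l; lra. }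
    simpl; nra. }
  pose proof (ratio_le_sq_sub_gap n Hn).
  pose proof (sq_div_le y (INR (k + 1)) (INR n) ltac:(rewrite plus_INR; simpl; lra) ltac:(lra)).
  pose proof (gap_const_pos beta Hbeta).
  rewrite ln_sinc_factor_eq by lia. fold q. rewrite (Rabs_pos_eq q) by lra.
  rewrite <- ln_mult by lra. apply ln_factor_ge_of_gap; [lra | lia|].
  split; [nra|]. rewrite Rabs_pos_eq; unfold q in *; nra.
Qed.

Lemma sum_ln_factor_ge_of_pos N : (4 * k <= N)%nat ->
  ln (1 + gap_const beta) * y / 2 - (5 * ln 2 + 2 + beta * ln 2 + 2 * beta * ln y)
  <= sum_to (ln_factor beta t) N.
Proof.
  intros HN. pose proof floor_ge_2. assert (Hk0 : 0 < INR k) by (apply INR_pos; lia).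
  set (f := ln_factor beta t). set (D := ln (1 + gap_const beta)).
  assert (HD : 0 < D) by (apply ln_gt_0; pose proof (gap_const_pos beta Hbeta); lra).
  assert (Hsplit : sum_to f N = sum_to f (k - 1) + f k + f (k + 1)%nat
      + sum_between f (k + 1)%nat (2 * k + 1) + sum_between f (2 * k + 1) (4 * k)
      + sum_between f (4 * k) N).
  { unfold sum_between.
    assert (sum_to f (k + 1) = sum_to f (k - 1) + f k + f (k + 1)%nat) as ->; [|ring].
    replace (k + 1)%nat with (S (S (k - 1))) by lia. simpl sum_to.
    replace (S (k - 1)) with k by lia. reflexivity. }
  assert (Hbelow : sum_to (ln_sinc_factor k) (k - 1) - sum_to inv_sq (k - 1) <= sum_to f (k - 1)).
  { rewrite <- sum_to_minus. apply sum_to_le. intros n Hn. apply ln_factor_ge_below. lia. }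
  assert (Hk_crude : - (ln 2 + beta * ln y) <= f k).
  { eapply Rle_trans; [| apply ln_factor_ge_crude; lra || lia].
    assert (ln (INR k) <= ln y) by (apply ln_le; lra). nra. }
  assert (Hk1_crude : - (ln 2 + beta * (ln 2 + ln y)) <= f (k + 1)%nat).
  { eapply Rle_trans; [| apply ln_factor_ge_crude; lra || lia].
    assert (ln (INR (k + 1)) <= ln 2 + ln y).
    { rewrite <- ln_mult by lra. apply ln_le; [apply INR_pos; lia|].
      rewrite plus_INR. simpl. lra. }
    nra. }
  assert (Habove : forall a b, (k + 1 <= a <= b)%nat ->
      sum_between (ln_sinc_factor (k + 1)) a b - sum_between inv_sq a b <= sum_between f a b).
  { intros a b Hab. rewrite <- sum_between_minus. apply sum_between_le; [lia|].
    intros n Hn. apply ln_factor_ge_above. lia. }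
  assert (Hgap : sum_between (ln_sinc_factor (k + 1)) (2 * k + 1) (4 * k)
      + (INR (4 * k) - INR (2 * k + 1)) * D - sum_between inv_sq (2 * k + 1) (4 * k)
      <= sum_between f (2 * k + 1) (4 * k)).
  { apply Rle_trans with
      (sum_between (fun n => ln_sinc_factor (k + 1) n + D - inv_sq n) (2 * k + 1) (4 * k)).
    - unfold sum_between. rewrite !sum_to_minus, !sum_to_plus, !sum_to_const. lra.
    - apply sum_between_le; [lia|]. intros n Hn. apply ln_factor_ge_gap. lia. }
  pose proof (Habove (k + 1) (2 * k + 1) ltac:(lia))%nat.
  pose proof (Habove (4 * k) N ltac:(lia))%nat.
  pose proof (sum_ln_sinc_factor_ge k N ltac:(lia) ltac:(lia)).
  pose proof (sum_to_inv_sq_le N).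
  pose proof (sum_to_mono inv_sq (k - 1) (k + 1) ltac:(lia) (fun n _ => inv_sq_ge_0 n)).
  assert (Hcount : y / 2 * D <= (INR (4 * k) - INR (2 * k + 1)) * D).
  { apply Rmult_le_compat_r; [lra|]. rewrite plus_INR, !mult_INR. simpl. lra. }
  rewrite Hsplit. unfold sum_between in *. lra.
Qed.

End Sum_bounds.

Lemma ln_le_linear_eventually A B c : 0 <= A -> 0 <= B -> 0 < c ->
  exists Y, 2 <= Y /\ forall y, Y <= y -> A + B * ln y <= c * y.
Proof.
  intros HA HB Hc. set (s0 := (A + 2 * B) / c + 1).
  assert (Hs0 : 1 <= s0) by (unfold s0; pose proof (Rdiv_le_0_compat (A + 2 * B) c); lra).
  exists (Rmax 2 (s0 ^ 2)). split; [apply Rmax_l|]. intros y Hy.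
  pose proof (Rmax_l 2 (s0 ^ 2)). pose proof (Rmax_r 2 (s0 ^ 2)).
  pose proof (ln_le_2sqrt y ltac:(lra)).
  set (s := sqrt y) in *. assert (Hss : s * s = y) by (apply sqrt_sqrt; lra).
  assert (Hs : s0 <= s) by (rewrite <- (sqrt_pow2 s0) by lra; apply sqrt_le_1_alt; lra).
  assert (c * (s * s0) = s * (A + 2 * B) + c * s) by (unfold s0; field; lra).
  assert (c * (s * s0) <= c * (s * s)) by (apply Rmult_le_compat_l; [|apply Rmult_le_compat_l]; lra).
  nra.
Qed.

Theorem lemma5p2 (beta : R) (hbeta : 2 < beta) :
  exists C1 C2 R0 : R,
    0 < C1 /\ C1 <= C2 /\ 0 < R0 /\
    forall x : R, R0 < Rabs x ->
      C1 * Rpower (Rabs x) (1 / beta) <= ln (Cmod (E_beta beta (RtoC x))) /\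
      ln (Cmod (E_beta beta (RtoC x))) <= C2 * Rpower (Rabs x) (1 / beta).
Proof.
  set (D := ln (1 + gap_const beta)).
  pose proof (gap_const_pos beta hbeta). pose proof (gap_const_le beta). pose proof ln_2_pos.
  assert (HD : 0 < D) by (apply ln_gt_0; lra).
  assert (HD2 : D <= ln 2) by (apply ln_le; lra).
  destruct (ln_le_linear_eventually (5 * ln 2 + 2 + beta * ln 2) (2 * beta) (D / 4))
    as [Y [HY HYlin]]; [nra | lra | lra |].
  exists (D / 4), (ln 2 + 2 * beta + 2), (Rpower Y beta).
  split; [lra|]. split; [lra|]. split; [apply exp_pos|].
  intros x Hx. set (y := Rpower (Rabs x) (1 / beta)).
  assert (Hx0 : 0 < Rabs x) by (assert (0 < Rpower Y beta) by apply exp_pos; lra).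
  assert (Hty : Rpower y beta = Rabs x) by (apply Rpower_root_pow; lra).
  assert (HYy : Y < y) by (apply lt_Rpower_root; lra).
  destruct (nat_floor_exists y ltac:(lra)) as [k Hk].
  pose proof (HYlin y ltac:(lra)).
  assert (Hupper : forall N, sum_to (ln_factor beta x) N <= (ln 2 + 2 * beta + 2) * y)
    by (intros N; apply (sum_ln_factor_le beta y k); lra).
  destruct (Rle_or_lt 0 x) as [Hpos | Hneg].
  - assert (Hxy : x = Rpower y beta) by (rewrite Hty, Rabs_pos_eq; lra).
    apply (ln_Cmod_E_beta_between _ _ _ _ (4 * k)); [lra|]. intros N HN.
    split; [|apply Hupper]. rewrite Hxy.
    eapply Rle_trans; [| apply (sum_ln_factor_ge_of_pos beta y k); lra || exact HN].
    fold D. lra.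
  - assert (Hxy : x = - Rpower y beta) by (rewrite Hty, Rabs_left; lra).
    apply (ln_Cmod_E_beta_between _ _ _ _ k); [lra|]. intros N HN.
    split; [|apply Hupper]. rewrite Hxy.
    eapply Rle_trans; [| apply (sum_ln_factor_ge_of_neg beta y k); lra || exact HN].
    apply Rmult_le_compat_r; lra.
Qed.
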